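(* Let $d\ge 2$, $2\le k\le d+1$, and let $y_1,\dots,y_N\in\{1,\dots,k\}$ be labels of a class-balanced dataset (each class has exactly $N/k\ge1$ samples). Let $s>0$, $\alpha_1\ge\frac12$, $\alpha_2\le\alpha_1$, $\beta_1,\beta_2\in\mathbb R$. For $\boldsymbol w_1,\dots,\boldsymbol w_k,\boldsymbol z_1,\dots,\boldsymbol z_N\in\mathbb S^{d-1}$ define the GM-Softmax empirical risk $$L=\frac1N\sum_{i=1}^N-\log\frac{\exp(s(\alpha_1\boldsymbol w_{y_i}^{\mathrm T}\boldsymbol z_i+\beta_1))}{\exp(s(\alpha_2\boldsymbol w_{y_i}^{\mathrm T}\boldsymbol z_i+\beta_2))+\sum_{j\ne y_i}\exp(s\boldsymbol w_j^{\mathrm T}\boldsymbol z_i)}.$$ Then for all such configurations $$L\ge \log\Big[\exp\big(s(\alpha_2-\alpha_1+\beta_2-\beta_1)\big)+(k-1)\exp\big(-s(\tfrac1{k-1}+\alpha_1+\beta_1)\big)\Big],$$ with equality if and only if $\boldsymbol w_i^{\mathrm T}\boldsymbol w_j=-\frac1{k-1}$ for all $i\ne j$ and $\boldsymbol z_i=\boldsymbol w_{y_i}$ for all $i$. Consequently every minimizer of $L$ has the largest possible class margin $m_c=\arccos\frac{-1}{k-1}$ and the largest possible minimal sample margin $\gamma_{\min}=\frac{k}{k-1}$.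
   Context: $\mathbb S^{d-1}$ is the unit sphere in $\mathbb R^d$. Class margin: $m_c(\{\boldsymbol w_i\})=\arccos\big[\max_{i\ne j}\boldsymbol w_i^{\mathrm T}\boldsymbol w_j\big]$ for unit prototypes. Minimal sample margin: $\gamma_{\min}=\min_i\big(\boldsymbol w_{y_i}^{\mathrm T}\boldsymbol z_i-\max_{j\ne y_i}\boldsymbol w_j^{\mathrm T}\boldsymbol z_i\big)$. *)

From HB Require Import structures.
From mathcomp Require Import all_boot all_order all_algebra.
From mathcomp Require Import all_classical all_reals all_analysis.
Set Implicit Arguments. Unset Strict Implicit. Unset Printing Implicit Defensive.
Import Order.TTheory GRing.Theory Num.Theory.
Local Open Scope ring_scope.

Definition dot {R : realType} {d : nat} (u v : 'rV[R]_d) : R :=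
  \sum_(i < d) u 0 i * v 0 i.

Definition on_sphere {R : realType} {d : nat} (u : 'rV[R]_d) : Prop :=
  dot u u = 1.

Definition balanced {N k : nat} (y : 'I_N -> 'I_k) : Prop :=
  (0 < N)%N /\ forall c : 'I_k, (#|[set i | y i == c]| * k)%N = N.

Definition gm_loss {R : realType} {d k N : nat} (y : 'I_N -> 'I_k)
  (s a1 a2 b1 b2 : R) (w : 'I_k -> 'rV[R]_d) (z : 'I_N -> 'rV[R]_d) : R :=
  N%:R^-1 * \sum_(i < N)
    - ln (expR (s * (a1 * dot (w (y i)) (z i) + b1)) /
          (expR (s * (a2 * dot (w (y i)) (z i) + b2)) +
           \sum_(j < k | j != y i) expR (s * dot (w j) (z i)))).

Definition gm_bound {R : realType} (k : nat) (s a1 a2 b1 b2 : R) : R :=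
  ln (expR (s * (a2 - a1 + b2 - b1)) +
      (k%:R - 1) * expR (- (s * ((k%:R - 1)^-1 + a1 + b1)))).

(* class margin m_c = arccos (max_{i<>j} w_i^T w_j).  The default element -1
   of the max is harmless: unit vectors have inner product >= -1 and for
   k >= 2 the index set is nonempty. *)
Definition class_margin {R : realType} {d k : nat} (w : 'I_k -> 'rV[R]_d) : R :=
  acos (\big[Num.max/(-1)]_(p : 'I_k * 'I_k | p.1 != p.2) dot (w p.1) (w p.2)).

(* minimal sample margin gamma_min = min_i (w_{y_i}^T z_i - max_{j<>y_i} w_j^T z_i).
   Defaults -1 (inner max) and 2 (outer min) are harmless on the sphere
   with k >= 2 and N >= 1. *)
Definition min_sample_margin {R : realType} {d k N : nat} (y : 'I_N -> 'I_k)
  (w : 'I_k -> 'rV[R]_d) (z : 'I_N -> 'rV[R]_d) : R :=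
  \big[Num.min/2]_(i < N)
    (dot (w (y i)) (z i) - \big[Num.max/(-1)]_(j < k | j != y i) dot (w j) (z i)).

From HB Require Import structures.
From mathcomp Require Import all_boot all_order all_algebra.
From mathcomp Require Import all_classical all_reals all_analysis.
From mathcomp Require Import ring lra.
Import Order.TTheory GRing.Theory Num.Theory.
Local Open Scope ring_scope.

(* For one sample, Jensen's inequality for [expR], with the weights
   [expR (s (a2 + b2))] and [expR (- s / (k - 1))] (normalised) of the bound's own
   denominator, bounds the loss below by the bound plus a term that is linear in
   the similarities.  Summed over a balanced dataset, with [W = sum_j w_j] and
   [lam = 1 + (k - 1) a1], the linear part is a positive multiple of
   [sum_i |lam (z_i - w_{y_i}) + W|^2 + (N/k) (2 lam - k) |W|^2], and
   [2 lam - k > 0] because [a1 >= 1/2].  So the loss is at least the bound, and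
   equality forces [W = 0], [z_i = w_{y_i}] and equal exponents in each Jensen
   step, i.e. a simplex equiangular tight frame.  Such a frame reaches the bound
   and exists in [R^d] since [k <= d + 1]; hence every minimizer is one. *)

Section Dot.
Context {R : realType} {d : nat}.
Implicit Types u v x : 'rV[R]_d.

Lemma dotC u v : dot u v = dot v u.
Proof. by apply: eq_bigr => i _; rewrite mulrC. Qed.

Lemma dotDl u v x : dot (u + v) x = dot u x + dot v x.
Proof. by rewrite /dot -big_split; apply: eq_bigr => i _; rewrite mxE mulrDl. Qed.

Lemma dotZl (a : R) u x : dot (a *: u) x = a * dot u x.
Proof. by rewrite /dot mulr_sumr; apply: eq_bigr => i _; rewrite mxE mulrA. Qed.

Lemma dotNl u x : dot (- u) x = - dot u x.
Proof. by rewrite -scaleN1r dotZl mulN1r. Qed.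

Lemma dotBl u v x : dot (u - v) x = dot u x - dot v x.
Proof. by rewrite dotDl dotNl. Qed.

Lemma dotDr u v x : dot x (u + v) = dot x u + dot x v.
Proof. by rewrite dotC dotDl !(dotC x). Qed.

Lemma dotZr (a : R) u x : dot x (a *: u) = a * dot x u.
Proof. by rewrite dotC dotZl dotC. Qed.

Lemma dotNr u x : dot x (- u) = - dot x u.
Proof. by rewrite dotC dotNl dotC. Qed.

Lemma dotBr u v x : dot x (u - v) = dot x u - dot x v.
Proof. by rewrite dotC dotBl !(dotC x). Qed.

Lemma dot_suml (I : finType) (P : pred I) (F : I -> 'rV[R]_d) x :
  dot (\sum_(j | P j) F j) x = \sum_(j | P j) dot (F j) x.
Proof. by rewrite /dot exchange_big; apply: eq_bigr => i _; rewrite summxE mulr_suml. Qed.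

Lemma dotvv_ge0 u : 0 <= dot u u.
Proof. by apply: sumr_ge0 => i _; exact: sqr_ge0. Qed.

Lemma dotvv_eq0 u : dot u u = 0 -> u = 0.
Proof.
move=> /(psumr_eq0P (fun i _ => sqr_ge0 (u 0 i))) u0.
apply/rowP => i; rewrite mxE.
by apply/eqP; rewrite -[_ == 0]orbb -mulf_eq0; apply/eqP/u0.
Qed.

Lemma dot_delta_mx (p : 'I_d) u : dot (delta_mx 0 p) u = u 0 p.
Proof.
rewrite /dot (bigD1 p) //= mxE !eqxx mul1r big1 ?addr0 // => i ip.
by rewrite mxE (negbTE ip) andbF mul0r.
Qed.

Lemma sphere_dot_le1 u v : on_sphere u -> on_sphere v -> dot u v <= 1.
Proof.
move=> su sv; have := dotvv_ge0 (u - v).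
rewrite !(dotBl, dotBr) su sv (dotC v u); lra.
Qed.

End Dot.

Section ExpJensen.
Context {R : realType}.

Lemma expR_tangent_le (x m : R) : expR m * (1 + (x - m)) <= expR x.
Proof.
rewrite -[X in _ <= expR X](subrK m) (addrC _ m) expRD.
by rewrite ler_pM2l ?expR_gt0 // expR_ge1Dx.
Qed.

Lemma expR_tangent_eq (x m : R) : expR x = expR m * (1 + (x - m)) -> x = m.
Proof.
rewrite -[X in expR X = _](subrK m) (addrC _ m) expRD => /(mulfI (lt0r_neq0 (expR_gt0 m))).
have [/eqP|/expR_gt1Dx] := eqVneq (x - m) 0; first by rewrite subr_eq0 => /eqP.
by move=> + E; rewrite E ltxx.
Qed.

Context {I : finType} {P : pred I} {p x : I -> R}.
Hypotheses (p_ge0 : forall i, P i -> 0 <= p i) (p_sum1 : \sum_(i | P i) p i = 1).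
Local Notation m := (\sum_(i | P i) p i * x i).

Lemma expR_wmean_gap :
  \sum_(i | P i) p i * expR (x i) - expR m =
  \sum_(i | P i) p i * (expR (x i) - expR m * (1 + (x i - m))).
Proof.
under [RHS]eq_bigr do rewrite mulrBr.
rewrite sumrB; congr (_ - _); apply/esym.
under eq_bigr do rewrite mulrCA mulrDr mulr1 mulrBr.
rewrite -mulr_sumr big_split sumrB /= -mulr_suml p_sum1.
by rewrite mul1r subrr addr0 mulr1.
Qed.

Lemma expR_wmean_le : expR m <= \sum_(i | P i) p i * expR (x i).
Proof.
rewrite -subr_ge0 expR_wmean_gap; apply: sumr_ge0 => i Pi.
by rewrite mulr_ge0 ?p_ge0 // subr_ge0 expR_tangent_le.
Qed.

Lemma expR_wmean_eq : (forall i, P i -> 0 < p i) ->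
  \sum_(i | P i) p i * expR (x i) = expR m -> forall i, P i -> x i = m.
Proof.
move=> p_gt0 /eqP; rewrite -subr_eq0 expR_wmean_gap => /eqP gap0 i Pi.
have gap_ge0 j : P j -> 0 <= p j * (expR (x j) - expR m * (1 + (x j - m))).
  by move=> Pj; rewrite mulr_ge0 ?p_ge0 // subr_ge0 expR_tangent_le.
move: (psumr_eq0P gap_ge0 gap0 Pi) => /eqP.
rewrite mulf_eq0 gt_eqF ?p_gt0 //= subr_eq0 => /eqP.
exact: expR_tangent_eq.
Qed.

End ExpJensen.

Lemma ge1_natB1 {R : numDomainType} (k : nat) : (1 < k)%N -> 1 <= k%:R - 1 :> R.
Proof. by move=> k_gt1; rewrite lerBrDr -(natrD R 1 1) ler_nat. Qed.

Lemma sumr_neq_const {R : ringType} {k : nat} (c : 'I_k) (a : R) :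
  \sum_(j | j != c) a = (k%:R - 1) * a.
Proof.
rewrite sumr_const -[in LHS]mulr_natl; congr (_ * _).
have -> : #|[pred j | j != c]| = #|predC1 c| by apply: eq_card => j; rewrite !inE.
by rewrite cardC1 card_ord; case: k c => [[]//|n _]; rewrite -natr1 addrK.
Qed.

Definition gm_partition {R : realType} (k : nat) (s a2 b2 : R) : R :=
  expR (s * (a2 + b2)) + (k%:R - 1) * expR (- (s * (k%:R - 1)^-1)).

Definition gm_sample_loss {R : realType} {k : nat} (s a1 a2 b1 b2 : R)
    (c : 'I_k) (v : 'I_k -> R) : R :=
  - ln (expR (s * (a1 * v c + b1)) /
        (expR (s * (a2 * v c + b2)) + \sum_(j | j != c) expR (s * v j))).

Definition collapse_defect {R : realType} {k : nat} (a1 : R)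
    (c : 'I_k) (v : 'I_k -> R) : R :=
  \sum_(j | j != c) v j + 1 + (k%:R - 1) * a1 * (1 - v c).

Definition gm_sample_bound {R : realType} {k : nat} (s a1 a2 b1 b2 : R)
    (c : 'I_k) (v : 'I_k -> R) : R :=
  gm_bound k s a1 a2 b1 b2 + s / gm_partition k s a2 b2 *
    (expR (s * (a2 + b2)) * (a1 - a2) * (1 - v c) +
     expR (- (s * (k%:R - 1)^-1)) * collapse_defect a1 c v).

Section Partition.
Context {R : realType} {k : nat} (s a1 a2 b1 b2 : R).
Hypothesis k_gt0 : (0 < k)%N.

Lemma gm_partition_gt0 : 0 < gm_partition k s a2 b2.
Proof.
by rewrite ltr_pwDl ?expR_gt0 // mulr_ge0 ?expR_ge0 // subr_ge0 ler1n.
Qed.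

Lemma gm_boundE :
  gm_bound k s a1 a2 b1 b2 = ln (gm_partition k s a2 b2) - s * (a1 + b1).
Proof.
have -> : gm_bound k s a1 a2 b1 b2 =
    ln (gm_partition k s a2 b2 * expR (- (s * (a1 + b1)))).
  rewrite /gm_bound /gm_partition [in RHS]mulrDl -mulrA -!expRD.
  by congr (ln (expR _ + _ * expR _)); ring.
by rewrite lnM ?posrE ?expR_gt0 ?gm_partition_gt0 // expRK.
Qed.

End Partition.

Section SampleLoss.
Context {R : realType} {k : nat} {s a1 a2 b1 b2 : R}.
Hypotheses (k_gt1 : (1 < k)%N) (s_gt0 : 0 < s).
Context {c : 'I_k} {v : 'I_k -> R}.

Local Notation kap := (k%:R - 1 : R).
Local Notation Z := (gm_partition k s a2 b2).

Let kap_neq0 : kap != 0.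
Proof. by rewrite gt_eqF // (lt_le_trans ltr01) ?ge1_natB1. Qed.

Let Z_gt0 : 0 < Z.
Proof. exact/gm_partition_gt0/ltnW. Qed.

(* The terms of the denominator are the [r j * expR (e j)], and the Jensen
   weights are [q j = r j / Z]. *)
Let r j := if j == c then expR (s * (a2 + b2)) else expR (- (s * kap^-1)).
Let e j := if j == c then s * a2 * (v c - 1) else s * (v j + kap^-1).
Let q j := r j / Z.

Let split_c (F : 'I_k -> R) : \sum_j F j = F c + \sum_(j | j != c) F j.
Proof. exact: bigD1. Qed.

Let q_gt0 j : 0 < q j.
Proof. by rewrite divr_gt0 // /r; case: eqP; rewrite expR_gt0. Qed.

Let q_sum1 : \sum_j q j = 1.
Proof.
rewrite -mulr_suml split_c /r eqxx.
rewrite (eq_bigr (fun=> expR (- (s * kap^-1)))) => [|j /negbTE -> //].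
by rewrite sumr_neq_const divff ?gt_eqF.
Qed.

Let denominatorE :
  expR (s * (a2 * v c + b2)) + \sum_(j | j != c) expR (s * v j) =
  \sum_j r j * expR (e j).
Proof.
rewrite split_c /r /e eqxx -expRD; congr (expR _ + _); first ring.
apply: eq_bigr => j /negbTE ->; rewrite -expRD; congr expR.
by field.
Qed.

Let T := \sum_j q j * expR (e j).
Let m := \sum_j q j * e j.

Let TE : T = (\sum_j r j * expR (e j)) / Z.
Proof. by rewrite mulr_suml; apply: eq_bigr => j _; rewrite mulrAC. Qed.

Let meanE : m = s / Z * (expR (s * (a2 + b2)) * a2 * (v c - 1) +
  expR (- (s * kap^-1)) * (\sum_(j | j != c) v j + 1)).
Proof.
rewrite /m split_c /q /r /e eqxx.
under eq_bigr => j /negbTE -> do rewrite !mulrDr.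
rewrite big_split /= sumr_neq_const -!mulr_sumr.
by field; rewrite lt0r_neq0.
Qed.

Let expR_mean_le : expR m <= T.
Proof. exact: (expR_wmean_le (P := xpredT)) (fun j _ => ltW (q_gt0 j)) q_sum1. Qed.

Let T_gt0 : 0 < T.
Proof. exact: lt_le_trans (expR_gt0 m) expR_mean_le. Qed.

Let gm_sample_lossE :
  gm_sample_loss s a1 a2 b1 b2 c v = gm_sample_bound s a1 a2 b1 b2 c v + (ln T - m).
Proof.
have den_gt0 : 0 < \sum_j r j * expR (e j).
  by rewrite -[X in 0 < X](divfK (lt0r_neq0 Z_gt0)) -TE mulr_gt0.
rewrite /gm_sample_loss denominatorE lnM ?posrE ?expR_gt0 ?invr_gt0 //.
rewrite lnV ?posrE // expRK -[X in ln X](divfK (lt0r_neq0 Z_gt0)) -TE lnM ?posrE //.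
rewrite /gm_sample_bound /collapse_defect (gm_boundE _ _ _ _ _ (ltnW k_gt1)) meanE.
by rewrite /gm_partition; field; rewrite -/(gm_partition k s a2 b2) lt0r_neq0.
Qed.

Lemma gm_sample_loss_ge :
  gm_sample_bound s a1 a2 b1 b2 c v <= gm_sample_loss s a1 a2 b1 b2 c v.
Proof. by rewrite gm_sample_lossE lerDl subr_ge0 -ler_expR lnK. Qed.

Lemma gm_sample_loss_eq_bound :
  gm_sample_loss s a1 a2 b1 b2 c v = gm_sample_bound s a1 a2 b1 b2 c v ->
  forall j, j != c -> v j = a2 * (v c - 1) - kap^-1.
Proof.
rewrite gm_sample_lossE => /eqP; rewrite addrC -subr_eq0 addrK subr_eq0 => /eqP lnT.
have T_eq : T = expR m by rewrite -lnT lnK.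
have e_mean := expR_wmean_eq (P := xpredT) (x := e) (fun j _ => ltW (q_gt0 j)) q_sum1
  (fun j _ => q_gt0 j) T_eq.
move=> j jc.
have := e_mean j isT; rewrite -(e_mean c isT) /e eqxx (negbTE jc) -mulrA.
by move=> /(mulfI (lt0r_neq0 s_gt0)) <-; rewrite addrK.
Qed.

End SampleLoss.

Section Balanced.
Context {N k : nat} {y : 'I_N -> 'I_k}.
Hypothesis y_bal : balanced y.

Lemma balanced_sum {R : ringType} (F : 'I_k -> R) :
  k%:R * \sum_i F (y i) = N%:R * \sum_c F c.
Proof.
case: y_bal => _ class_size.
rewrite (partition_big y xpredT) //= !mulr_sumr; apply: eq_bigr => c _.
rewrite (eq_bigr (fun=> F c)) => [|i /eqP -> //].
rewrite sumr_const -[F c *+ _]mulr_natl mulrA -natrM; congr (_%:R * _).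
by rewrite -[RHS](class_size c) mulnC; congr (_ * _)%N; apply: eq_card => i; rewrite inE.
Qed.

Lemma balanced_fiber (c : 'I_k) : exists i, y i = c.
Proof.
case: y_bal => N_gt0 /(_ c) size_c.
have : (0 < #|[set i | y i == c]| * k)%N by rewrite size_c.
by rewrite muln_gt0 => /andP[/card_gt0P [i]]; rewrite inE => /eqP; exists i.
Qed.

End Balanced.

Section CollapseDefect.
Context {R : realType} {d k N : nat} {y : 'I_N -> 'I_k} {a1 : R}.
Context {w : 'I_k -> 'rV[R]_d} {z : 'I_N -> 'rV[R]_d}.
Hypotheses (k_gt1 : (1 < k)%N) (y_bal : balanced y) (a1_ge : 2^-1 <= a1).
Hypotheses (w_sph : forall j, on_sphere (w j)) (z_sph : forall i, on_sphere (z i)).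

Local Notation defect i := (collapse_defect a1 (y i) (fun j => dot (w j) (z i))).

Let lam : R := 1 + (k%:R - 1) * a1.
Let W := \sum_j w j.
Let u i := lam *: (z i - w (y i)) + W.

Let k_gt0 : 0 < k%:R :> R.
Proof. by rewrite ltr0n ltnW. Qed.

Let kB1_ge1 : 1 <= k%:R - 1 :> R := @ge1_natB1 R k k_gt1.

Let excess_gt0 : 0 < 2 * lam - k%:R.
Proof.
have : 1 <= 2 * a1 by rewrite -[X in X <= _](@mulfV _ 2) ?pnatr_eq0 // ler_pM2l.
move=> a1_ge'; have : 0 <= (k%:R - 1) * (2 * a1 - 1).
  by rewrite mulr_ge0 ?(le_trans ler01 kB1_ge1) ?subr_ge0.
rewrite /lam; lra.
Qed.

Let lam_gt0 : 0 < lam.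
Proof. by have := excess_gt0; have := k_gt0; lra. Qed.

Let defectE i :
  2 * lam * defect i = dot (u i) (u i) + 2 * lam * dot W (w (y i)) - dot W W.
Proof.
have -> : defect i = dot W (z i) + lam * (1 - dot (w (y i)) (z i)).
  by rewrite /collapse_defect /W dot_suml [\sum_j _](bigD1 (y i)) //= /lam; ring.
rewrite /u !(dotDl, dotDr, dotZl, dotZr, dotNl, dotNr) z_sph w_sph.
by rewrite (dotC (z i) (w _)) (dotC (z i) W) (dotC (w _) W); ring.
Qed.

Let defect_sumE : k%:R * (2 * lam) * \sum_i defect i =
  k%:R * \sum_i dot (u i) (u i) + N%:R * (2 * lam - k%:R) * dot W W.
Proof.
have cross : k%:R * \sum_i dot W (w (y i)) = N%:R * dot W W.
  rewrite (balanced_sum y_bal (fun c => dot W (w c))) [in RHS]/W dot_suml.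
  by congr (_ * _); apply: eq_bigr => c _; rewrite dotC.
rewrite -mulrA mulr_sumr (eq_bigr _ (fun i _ => defectE i)).
rewrite !sumrB big_split /= -mulr_sumr sumr_const card_ord -[_ *+ N]mulr_natl.
have -> : \sum_i dot W (w (y i)) = N%:R * dot W W / k%:R.
  by rewrite -cross; field; rewrite lt0r_neq0.
by field; rewrite lt0r_neq0.
Qed.

Let uu_ge0 : 0 <= \sum_i dot (u i) (u i).
Proof. by apply: sumr_ge0 => i _; exact: dotvv_ge0. Qed.

Let WW_ge0 : 0 <= N%:R * (2 * lam - k%:R) * dot W W.
Proof. by rewrite !mulr_ge0 ?ler0n ?dotvv_ge0 ?(ltW excess_gt0). Qed.

Lemma collapse_defect_sum_ge0 : 0 <= \sum_i defect i.
Proof.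
have c_gt0 : 0 < k%:R * (2 * lam) by rewrite !mulr_gt0.
rewrite -(pmulr_rge0 _ c_gt0) defect_sumE.
by apply: addr_ge0 => //; exact: mulr_ge0 (ler0n _ _) uu_ge0.
Qed.

Lemma collapse_defect_sum_eq0 : \sum_i defect i = 0 -> forall i, z i = w (y i).
Proof.
move=> sum0 i.
have /andP[/eqP uu0 /eqP WW0] : (k%:R * \sum_i dot (u i) (u i) == 0) &&
    (N%:R * (2 * lam - k%:R) * dot W W == 0).
  by rewrite -(paddr_eq0 (mulr_ge0 (ler0n _ _) uu_ge0) WW_ge0) -defect_sumE sum0 mulr0.
have W0 : W = 0.
  apply: dotvv_eq0; move/eqP: WW0; have [N_gt0 _] := y_bal.
  by rewrite !mulf_eq0 pnatr_eq0 (gtn_eqF N_gt0) (gt_eqF excess_gt0) => /eqP.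
have ui0 : u i = 0.
  apply: dotvv_eq0; move/eqP: uu0; rewrite mulf_eq0 pnatr_eq0 (gtn_eqF (ltnW k_gt1)) /=.
  by move=> /eqP /(psumr_eq0P (fun j _ => dotvv_ge0 (u j))) /(_ i isT).
move/eqP: ui0; rewrite /u W0 addr0 scaler_eq0 (gt_eqF lam_gt0) subr_eq0.
by move/eqP.
Qed.

End CollapseDefect.

Definition simplex_etf {R : realType} {d k : nat} (w : 'I_k -> 'rV[R]_d) : Prop :=
  forall i j, i != j -> dot (w i) (w j) = - (k%:R - 1)^-1.

Section LossBound.
Context {R : realType} {d k N : nat} {y : 'I_N -> 'I_k} {s a1 a2 b1 b2 : R}.
Hypotheses (k_gt1 : (1 < k)%N) (y_bal : balanced y).

Local Notation B := (gm_bound k s a1 a2 b1 b2).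
Local Notation Z := (gm_partition k s a2 b2).

Let N_gt0 : 0 < N%:R :> R.
Proof. by case: y_bal; rewrite ltr0n. Qed.

Let Z_gt0 : 0 < Z.
Proof. exact/gm_partition_gt0/ltnW. Qed.

Lemma gm_loss_simplex (w : 'I_k -> 'rV[R]_d) (z : 'I_N -> 'rV[R]_d) :
  (forall j, on_sphere (w j)) -> simplex_etf w -> (forall i, z i = w (y i)) ->
  gm_loss y s a1 a2 b1 b2 w z = B.
Proof.
move=> w_sph w_etf zw.
have sample_eq i : gm_sample_loss s a1 a2 b1 b2 (y i) (fun j => dot (w j) (z i)) = B.
  rewrite /gm_sample_loss zw w_sph !mulr1 (gm_boundE _ _ _ _ _ (ltnW k_gt1)).
  under eq_bigr => j jy do rewrite w_etf // mulrN.
  rewrite sumr_neq_const -/Z lnM ?posrE ?expR_gt0 ?invr_gt0 //.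
  by rewrite lnV ?posrE // expRK opprD opprK addrC.
rewrite /gm_loss (eq_bigr _ (fun i _ => sample_eq i)) sumr_const card_ord.
by rewrite -[B *+ N]mulr_natl mulKf ?gt_eqF.
Qed.

Hypotheses (s_gt0 : 0 < s) (a1_ge : 2^-1 <= a1) (a2_le : a2 <= a1).
Context {w : 'I_k -> 'rV[R]_d} {z : 'I_N -> 'rV[R]_d}.
Hypotheses (w_sph : forall j, on_sphere (w j)) (z_sph : forall i, on_sphere (z i)).

Local Notation v i := (fun j => dot (w j) (z i)).
Local Notation loss i := (gm_sample_loss s a1 a2 b1 b2 (y i) (v i)).
Local Notation sample_bound i := (gm_sample_bound s a1 a2 b1 b2 (y i) (v i)).
Local Notation margin_sum := (\sum_i (1 - dot (w (y i)) (z i))).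
Local Notation defect_sum := (\sum_i collapse_defect a1 (y i) (v i)).
Local Notation slack := (expR (s * (a2 + b2)) * (a1 - a2) * margin_sum +
  expR (- (s * (k%:R - 1)^-1)) * defect_sum).

Let gapE : N%:R * (gm_loss y s a1 a2 b1 b2 w z - B) =
  \sum_i (loss i - sample_bound i) + s / Z * slack.
Proof.
rewrite /gm_sample_bound sumrB big_split /= sumr_const card_ord -[B *+ N]mulr_natl.
rewrite -mulr_sumr big_split /= -!mulr_sumr.
by rewrite /gm_loss; field; rewrite ?lt0r_neq0.
Qed.

Let sample_gap_ge0 i : 0 <= loss i - sample_bound i.
Proof. by rewrite subr_ge0 gm_sample_loss_ge. Qed.

Let margin_term_ge0 : 0 <= expR (s * (a2 + b2)) * (a1 - a2) * margin_sum.
Proof.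
have sum_ge0 : 0 <= margin_sum.
  by apply: sumr_ge0 => i _; rewrite subr_ge0 sphere_dot_le1.
by rewrite !mulr_ge0 ?expR_ge0 ?subr_ge0.
Qed.

Let defect_term_ge0 : 0 <= expR (- (s * (k%:R - 1)^-1)) * defect_sum.
Proof.
exact: mulr_ge0 (expR_ge0 _) (collapse_defect_sum_ge0 k_gt1 y_bal a1_ge w_sph z_sph).
Qed.

Let slack_ge0 : 0 <= s / Z * slack.
Proof.
have sZ_ge0 : 0 <= s / Z by rewrite divr_ge0 ?ltW.
exact: mulr_ge0 sZ_ge0 (addr_ge0 margin_term_ge0 defect_term_ge0).
Qed.

Lemma gm_loss_ge : B <= gm_loss y s a1 a2 b1 b2 w z.
Proof.
by rewrite -subr_ge0 -(pmulr_rge0 _ N_gt0) gapE addr_ge0 ?sumr_ge0.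
Qed.

Lemma gm_loss_eq_bound : gm_loss y s a1 a2 b1 b2 w z = B ->
  simplex_etf w /\ (forall i, z i = w (y i)).
Proof.
move=> loss_eq.
have /andP[/eqP gap0 slack0] :
    (\sum_i (loss i - sample_bound i) == 0) && (s / Z * slack == 0).
  by rewrite -paddr_eq0 ?sumr_ge0 // -gapE loss_eq subrr mulr0.
have defect0 : defect_sum = 0.
  move: slack0; rewrite mulf_eq0 (gt_eqF (divr_gt0 s_gt0 Z_gt0)) /=.
  rewrite (paddr_eq0 margin_term_ge0 defect_term_ge0) => /andP[_].
  by rewrite mulf_eq0 (gt_eqF (expR_gt0 _)) => /eqP.
have zw := collapse_defect_sum_eq0 k_gt1 y_bal a1_ge w_sph z_sph defect0.
split=> // a b ab.
have [i yi] := balanced_fiber y_bal b.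
have sample_eq : loss i = sample_bound i.
  apply/eqP; rewrite -subr_eq0; apply/eqP.
  exact: (psumr_eq0P (fun j _ => sample_gap_ge0 j) gap0).
have := gm_sample_loss_eq_bound k_gt1 s_gt0 sample_eq a; rewrite yi => /(_ ab).
by rewrite zw yi w_sph subrr mulr0 sub0r.
Qed.

End LossBound.

Section SimplexFrame.
Context {R : realType} {d m : nat}.
Hypotheses (m_gt0 : (0 < m)%N) (m_le_d : (m <= d)%N).

Let e (p : 'I_m) : 'rV[R]_d := delta_mx 0 (widen_ord m_le_d p).
Let ones : 'rV[R]_d := \row_(i < d) (i < m)%N%:R.

Let dot_e p q : dot (e p) (e q) = (p == q)%:R.
Proof. by rewrite dot_delta_mx mxE eqxx. Qed.

Let dot_e_ones p : dot (e p) ones = 1.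
Proof. by rewrite dot_delta_mx mxE /= ltn_ord. Qed.

Let dot_ones : dot ones ones = m%:R.
Proof.
rewrite /dot (eq_bigr (fun i : 'I_d => if (i < m)%N then 1 else 0)) => [|i _].
  by rewrite -big_mkcond -(big_ord_widen d (fun=> 1) m_le_d) sumr_const card_ord.
by rewrite mxE; case: ifP; rewrite ?mulr1 ?mulr0.
Qed.

(* The frame lives in the first [m] coordinates: the vertices [a e_p + b 1]
   ([p < m]) and the apex [- t 1], where [t^2 = 1/m], [a^2 = 1 + 1/m] and
   [a + m b = t] make all norms [1] and all cross products [- 1/m]. *)
Let mr : R := m%:R.
Let t : R := (Num.sqrt mr)^-1.
Let a : R := Num.sqrt ((mr + 1) / mr).
Let b : R := (t - a) / mr.

Let mr_gt0 : 0 < mr.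
Proof. by rewrite ltr0n. Qed.

Let t2 : t ^+ 2 = mr^-1.
Proof. by rewrite exprVn sqr_sqrtr // ltW. Qed.

Let a2 : a ^+ 2 = (mr + 1) / mr.
Proof. by rewrite sqr_sqrtr // divr_ge0 // ?addr_ge0 // ltW. Qed.

Let a_mb : a + mr * b = t.
Proof. by rewrite /b; field; rewrite gt_eqF. Qed.

Let cross_ab : 2 * a * b + mr * b ^+ 2 = - mr^-1.
Proof.
have -> : 2 * a * b + mr * b ^+ 2 = (t ^+ 2 - a ^+ 2) / mr.
  by rewrite /b; field; rewrite gt_eqF.
by rewrite t2 a2; field; rewrite gt_eqF.
Qed.

Let vertex (j : 'I_m.+1) : 'rV[R]_d :=
  if unlift ord_max j is Some p then a *: e p + b *: ones else (- t) *: ones.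

Let dot_vertex_vertex p q :
  dot (a *: e p + b *: ones) (a *: e q + b *: ones) = a ^+ 2 * (p == q)%:R - mr^-1.
Proof.
rewrite !(dotDl, dotDr, dotZl, dotZr) dot_e !dot_e_ones (dotC ones) dot_e_ones dot_ones.
by rewrite -cross_ab -/mr; ring.
Qed.

Let dot_vertex_apex p : dot (a *: e p + b *: ones) ((- t) *: ones) = - mr^-1.
Proof.
rewrite !(dotDl, dotZl, dotZr) dot_e_ones dot_ones -/mr.
have -> : a * (- t * 1) + b * (- t * mr) = - t * (a + mr * b) by ring.
by rewrite a_mb mulNr -expr2 t2.
Qed.

Lemma simplex_etf_existsS :
  exists w : 'I_m.+1 -> 'rV[R]_d, (forall j, on_sphere (w j)) /\ simplex_etf w.
Proof.
have kapE : (m.+1)%:R - 1 = mr :> R by rewrite -natr1 addrK.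
exists vertex; split.
  move=> j; rewrite /on_sphere /vertex; case: unliftP => [p|] _.
    by rewrite dot_vertex_vertex eqxx mulr1 a2; field; rewrite gt_eqF.
  by rewrite dotZl dotZr dot_ones mulrA mulrNN -expr2 t2 mulVf ?gt_eqF.
move=> i j; rewrite /simplex_etf kapE /vertex.
case: (unliftP ord_max i) => [p ->|->]; case: (unliftP ord_max j) => [q ->|->].
- by rewrite (inj_eq lift_inj) => /negbTE pq; rewrite dot_vertex_vertex pq mulr0 add0r.
- by rewrite dot_vertex_apex.
- by rewrite dotC dot_vertex_apex.
- by rewrite eqxx.
Qed.

End SimplexFrame.

Lemma simplex_etf_exists {R : realType} {d k : nat} :
  (1 < k)%N -> (k <= d.+1)%N ->
  exists w : 'I_k -> 'rV[R]_d, (forall j, on_sphere (w j)) /\ simplex_etf w.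
Proof. by case: k => [//|m]; exact: simplex_etf_existsS. Qed.

Section BigMinMax.
Context {disp : Order.disp_t} {T : orderType disp} {I : finType}.
Context {P : pred I} {F : I -> T} {x0 c : T}.
Hypotheses (P_nonempty : exists i, P i) (F_const : forall i, P i -> F i = c).

Lemma bigmax_const_cond : (x0 <= c)%O -> \big[Order.max/x0]_(i | P i) F i = c.
Proof.
move=> x0_le; have [i0 Pi0] := P_nonempty.
apply/le_anti; rewrite bigmax_le //=; last by move=> i /F_const ->.
by rewrite (bigmax_sup i0 _ _ _ Pi0) // F_const.
Qed.

Lemma bigmin_const_cond : (c <= x0)%O -> \big[Order.min/x0]_(i | P i) F i = c.
Proof.
move=> le_x0; have [i0 Pi0] := P_nonempty.
apply/le_anti; rewrite le_bigmin ?andbT //=; last by move=> i /F_const ->.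
by rewrite (bigmin_inf i0 _ _ _ Pi0) // F_const.
Qed.

End BigMinMax.

Section Margins.
Context {R : realType} {d k N : nat} {y : 'I_N -> 'I_k} {w : 'I_k -> 'rV[R]_d}.
Hypotheses (k_gt1 : (1 < k)%N) (w_etf : simplex_etf w).

Let kap_gt0 : 0 < k%:R - 1 :> R.
Proof. by rewrite (lt_le_trans ltr01) ?ge1_natB1. Qed.

Let inv_kap_le1 : (k%:R - 1)^-1 <= 1 :> R.
Proof. by rewrite invf_le1 ?ge1_natB1. Qed.

Let other_label (c : 'I_k) : exists j, j != c.
Proof.
exists (if val c == 0%N then Ordinal k_gt1 else Ordinal (ltnW k_gt1)).
by have [c0|c0] := eqVneq (val c) 0%N; apply/eqP => E; move: c0; rewrite -E.
Qed.

Lemma class_margin_simplex : class_margin w = acos (- (k%:R - 1)^-1).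
Proof.
congr acos; apply: bigmax_const_cond.
- by exists (Ordinal k_gt1, Ordinal (ltnW k_gt1)).
- by case=> i j /= /w_etf.
- by rewrite lerN2.
Qed.

Hypotheses (N_gt0 : (0 < N)%N) (w_sph : forall j, on_sphere (w j)).

Lemma min_sample_margin_collapse (z : 'I_N -> 'rV[R]_d) :
  (forall i, z i = w (y i)) -> min_sample_margin y w z = k%:R / (k%:R - 1).
Proof.
move=> zw; have marginE : k%:R / (k%:R - 1) = 1 + (k%:R - 1)^-1 :> R.
  by field; rewrite gt_eqF.
rewrite /min_sample_margin marginE; apply: bigmin_const_cond.
- by exists (Ordinal N_gt0).
- move=> i _; rewrite zw w_sph.
  rewrite (bigmax_const_cond (other_label (y i)) (fun j => @w_etf j (y i))) ?lerN2 //.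
  by rewrite opprK.
- by rewrite -[2]/(1 + 1) lerD2l.
Qed.

End Margins.

Theorem theorem3 (R : realType) (d k N : nat) (y : 'I_N -> 'I_k)
  (s a1 a2 b1 b2 : R) :
  (2 <= d)%N -> (2 <= k)%N -> (k <= d.+1)%N -> balanced y ->
  0 < s -> 2^-1 <= a1 -> a2 <= a1 ->
  (forall (w : 'I_k -> 'rV[R]_d) (z : 'I_N -> 'rV[R]_d),
     (forall j, on_sphere (w j)) -> (forall i, on_sphere (z i)) ->
     gm_bound k s a1 a2 b1 b2 <= gm_loss y s a1 a2 b1 b2 w z /\
     (gm_loss y s a1 a2 b1 b2 w z = gm_bound k s a1 a2 b1 b2 <->
        (forall i j : 'I_k, i != j -> dot (w i) (w j) = - (k%:R - 1)^-1) /\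
        (forall i : 'I_N, z i = w (y i)))) /\
  (forall (w : 'I_k -> 'rV[R]_d) (z : 'I_N -> 'rV[R]_d),
     (forall j, on_sphere (w j)) -> (forall i, on_sphere (z i)) ->
     (forall (w' : 'I_k -> 'rV[R]_d) (z' : 'I_N -> 'rV[R]_d),
        (forall j, on_sphere (w' j)) -> (forall i, on_sphere (z' i)) ->
        gm_loss y s a1 a2 b1 b2 w z <= gm_loss y s a1 a2 b1 b2 w' z') ->
     class_margin w = acos (- (k%:R - 1)^-1) /\
     min_sample_margin y w z = k%:R / (k%:R - 1)).
Proof.
move=> _ k_gt1 k_le y_bal s_gt0 a1_ge a2_le; split.
  move=> w z w_sph z_sph; split; first exact: gm_loss_ge.
  split; first exact: gm_loss_eq_bound.
  by case=> w_etf zw; exact: gm_loss_simplex.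
move=> w z w_sph z_sph w_min.
have [w' [w'_sph w'_etf]] := simplex_etf_exists (R := R) k_gt1 k_le.
have loss_eq : gm_loss y s a1 a2 b1 b2 w z = gm_bound k s a1 a2 b1 b2.
  apply/eqP; rewrite eq_le gm_loss_ge // andbT.
  rewrite -(gm_loss_simplex k_gt1 y_bal _ (fun i => w' (y i)) w'_sph w'_etf (fun=> erefl)).
  exact: w_min.
have [w_etf zw] := gm_loss_eq_bound k_gt1 y_bal s_gt0 a1_ge a2_le w_sph z_sph loss_eq.
split; first exact: class_margin_simplex.
by apply: min_sample_margin_collapse => //; case: y_bal.
Qed.
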